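(* Let $(K_n,\Sigma)$ be a signed complete graph, and let $\mathcal{C}$ be a set of signed graphs $(G,\Sigma')$ with $G$ a spanning subgraph of $K_n$ such that: (i) $(K_n,\Sigma')\in\mathcal{C}$ if and only if $\Sigma'=\Sigma$; (ii) for each $(G,\Sigma')\in\mathcal{C}$ with $G\neq K_n$, there is an edge $vw\in E(K_n)\setminus E(G)$ such that $(G+vw,\Sigma')\in\mathcal{C}$ or $(G+vw,\Sigma'\cup\{vw\})\in\mathcal{C}$; (iii) for each $(G,\Sigma')\in\mathcal{C}$ and each $vw\in E(G)$, $(G\setminus vw,\Sigma'\setminus\{vw\})\in\mathcal{C}$ if and only if spectral integral variation occurs under the addition of $vw$ to $(G\setminus vw,\Sigma'\setminus\{vw\})$ with the same parity as in $(K_n,\Sigma)$. Then a signed graph (with underlying graph a spanning subgraph of $K_n$) is integrally $\Sigma$-completable if and only if it belongs to $\mathcal{C}$.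
   Context: All graphs are finite and simple. A signed graph is a pair $(G,\Sigma)$ with $\Sigma\subseteq E(G)$; edges in $\Sigma$ are odd, others even. The signed Laplacian is $L(G,\Sigma)=D(G)-A(G,\Sigma)$, $D(G)$ the diagonal degree matrix, $A(G,\Sigma)$ having $(i,j)$-entry $1$ for an even edge, $-1$ for an odd edge, $0$ otherwise. Adding a new even (resp. odd) edge $vw$ to $(G,\Sigma)$ gives $(G+vw,\Sigma)$ (resp. $(G+vw,\Sigma\cup\{vw\})$); adding it ''with the same parity as in $(K_n,\Sigma)$'' means odd if $vw\in\Sigma$ and even otherwise. Spectral integral variation occurs if, with eigenvalues in nondecreasing order, corresponding eigenvalues of the signed Laplacians before and after differ by integers. $G\setminus vw$ is $G$ with edge $vw$ removed. A signed graph $(G,\Sigma')$ with $V(G)=V(K_n)$ is integrally $\Sigma$-completable if there is a sequence $(G_0,\Sigma_0)=(G,\Sigma'),\dots,(G_m,\Sigma_m)=(K_n,\Sigma)$ such that for each $i\in\{1,\dots,m\}$, $(G_i,\Sigma_i)$ is obtained from $(G_{i-1},\Sigma_{i-1})$ by adding a new (odd or even) edge $v_iw_i\in E(K_n)\setminus E(G_{i-1})$ under which spectral integral variation occurs. *)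

From mathcomp Require Import all_boot all_order all_algebra.
Set Implicit Arguments. Unset Strict Implicit. Unset Printing Implicit Defensive.
Import Order.TTheory GRing.Theory Num.Theory.
Local Open Scope ring_scope.

Definition Kedges (n : nat) : {set {set 'I_n}} := [set e : {set 'I_n} | #|e| == 2%N].

(* A signed graph on the vertex set of K_n: (edge set E(G), odd edge set Sigma'). *)
Definition sgraph (n : nat) := ({set {set 'I_n}} * {set {set 'I_n}})%type.

Definition wf_sgraph n (g : sgraph n) : Prop :=
  g.1 \subset Kedges n /\ g.2 \subset g.1.

(* Signed Laplacian L = D - A, A_ij = 1 (even edge), -1 (odd edge), 0 (no edge). *)
Definition signed_laplacian (R : comNzRingType) n (g : sgraph n) : 'M[R]_n :=
  \matrix_(i, j)
    if i == j then (#|[set e in g.1 | i \in e]|)%:R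
    else if [set i; j] \in g.1 then (if [set i; j] \in g.2 then 1 else -1)
    else 0.

Definition eigen_seq (R : rcfType) n (A : 'M[R]_n) (s : seq R) : Prop :=
  sorted <=%R s /\ char_poly A = \prod_(x <- s) ('X - x%:P).

Definition SIV (R : rcfType) n (g g' : sgraph n) : Prop :=
  exists s s' : seq R,
    [/\ eigen_seq (signed_laplacian R g) s, eigen_seq (signed_laplacian R g') s'
      & forall i, (i < n)%N -> exists z : int, s'`_i - s`_i = z%:~R].

Definition add_edge n (g : sgraph n) (e : {set 'I_n}) (odd : bool) : sgraph n :=
  (e |: g.1, if odd then e |: g.2 else g.2).

Definition remove_edge n (g : sgraph n) (e : {set 'I_n}) : sgraph n :=
  (g.1 :\ e, g.2 :\ e).

Inductive int_completable (R : rcfType) n (Sigma : {set {set 'I_n}}) : sgraph n -> Prop :=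
  | ic_done : int_completable R Sigma (Kedges n, Sigma)
  | ic_step (g : sgraph n) (e : {set 'I_n}) (odd : bool) :
      e \in Kedges n :\: g.1 ->
      SIV R g (add_edge g e odd) ->
      int_completable R Sigma (add_edge g e odd) ->
      int_completable R Sigma g.

From mathcomp Require Import all_boot all_order all_algebra.
Set Implicit Arguments. Unset Strict Implicit. Unset Printing Implicit Defensive.

(* The parities along a completion sequence are forced: an edge, once added,
   keeps its parity up to (K_n, Sigma), so every added edge gets the parity
   it has in Sigma.  Hence condition (iii), applied to the edge just added,
   says that one step of a completion stays inside C exactly when it produces
   spectral integral variation.  Induction on the completion sequence gives
   "completable => in C"; induction on the number of missing edges, using (ii)
   to find the next edge and (i) at K_n, gives the converse. *)

Lemma add_edgeK n (g : sgraph n) e b :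
  g.2 \subset g.1 -> e \notin g.1 -> remove_edge (add_edge g e b) e = g.
Proof.
case: g => E S /= sSE eE; rewrite /remove_edge /add_edge /=.
have eS : e \notin S by apply: contra eE; apply: (subsetP sSE).
congr pair; apply/setP => x; rewrite !inE.
  by case: eqP => [->|]; [rewrite (negbTE eE)|].
by case: b; rewrite ?inE; case: eqP => [->|] //=; rewrite (negbTE eS).
Qed.

Lemma mem_add_edge_odd n (g : sgraph n) e b :
  e \notin g.2 -> (e \in (add_edge g e b).2) = b.
Proof. by case: b => eS //=; rewrite ?setU11 // (negbTE eS). Qed.

Lemma wf_add_edge n (g : sgraph n) e b :
  wf_sgraph g -> e \in Kedges n -> wf_sgraph (add_edge g e b).
Proof.
case=> gK gS eK; split; rewrite /add_edge /=; first by rewrite subUset sub1set eK.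
by case: b; [apply: setUS | apply: subset_trans (subsetUr _ _)].
Qed.

Lemma card_nonedges_add_edge n (g : sgraph n) e b :
  e \in Kedges n :\: g.1 ->
  #|Kedges n :\: (add_edge g e b).1| < #|Kedges n :\: g.1|.
Proof.
move=> eKg; apply: proper_card; rewrite properE setDS ?subsetUr //=.
by apply/subsetPn; exists e; rewrite // !inE eqxx.
Qed.

Section Completable.

Variables (R : rcfType) (n : nat) (Sigma : {set {set 'I_n}}).

Lemma int_completable_parity g :
  int_completable R Sigma g -> forall e, e \in g.1 -> (e \in g.2) = (e \in Sigma).
Proof.
elim=> [//|h e0 b0 e0h _ _ IH] e eh.
have ne : e != e0 by apply: contraTneq eh => ->; case/setDP: e0h.
rewrite -IH /add_edge /= ?in_setU1 ?eh ?orbT //.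
by case: b0 {IH}; rewrite ?in_setU1 ?(negbTE ne).
Qed.

Lemma int_completable_add_edge_parity g e b :
  int_completable R Sigma (add_edge g e b) -> e \notin g.2 -> b = (e \in Sigma).
Proof.
move=> gc eS; rewrite -(int_completable_parity gc) ?setU11 //.
by rewrite mem_add_edge_odd.
Qed.

Variable C : {set sgraph n}.
Hypothesis wf_C : forall g, g \in C -> wf_sgraph g.
Hypothesis C_complete : forall S', (Kedges n, S') \in C <-> S' = Sigma.
Hypothesis C_extend : forall g, g \in C -> g.1 != Kedges n ->
  exists2 e, e \in Kedges n :\: g.1 &
    (add_edge g e false \in C \/ add_edge g e true \in C).
Hypothesis C_remove : forall g, g \in C -> forall e, e \in g.1 ->
  (remove_edge g e \in C <->
   SIV R (remove_edge g e) (add_edge (remove_edge g e) e (e \in Sigma))).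

Lemma C_iff_SIV_add_edge g e b :
  wf_sgraph g -> e \notin g.1 -> add_edge g e b \in C -> b = (e \in Sigma) ->
  (g \in C <-> SIV R g (add_edge g e b)).
Proof.
case=> _ gS eg gbC ->.
by have := C_remove gbC (setU11 e g.1); rewrite add_edgeK.
Qed.

Lemma int_completable_in_C g :
  wf_sgraph g -> int_completable R Sigma g -> g \in C.
Proof.
move=> wfg gc; elim: gc wfg => [_ | h e b ehK hSIV hbc IH wfh].
  exact/C_complete.
case/setDP: (ehK) => eK eh.
have hbC := IH (wf_add_edge b wfh eK).
have eS : e \notin h.2 by apply: contra eh; apply: subsetP wfh.2 e.
apply/(C_iff_SIV_add_edge wfh eh hbC) => //.
exact: int_completable_add_edge_parity hbc eS.
Qed.

Lemma in_C_int_completable g : g \in C -> int_completable R Sigma g.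
Proof.
have [k] := ubnP #|Kedges n :\: g.1|.
elim: k g => // k IH g lt_gk gC.
have [gK gS] := wf_C gC.
have [gE|gE] := eqVneq g.1 (Kedges n).
  move: gC; case: g {lt_gk gK gS} gE => E S /= -> /C_complete ->.
  exact: ic_done.
have [e eKg ext] := C_extend gC gE.
have [b gbC] : exists b, add_edge g e b \in C by case: ext; eexists; eassumption.
have gbc : int_completable R Sigma (add_edge g e b).
  exact: IH (leq_trans (card_nonedges_add_edge b eKg) lt_gk) gbC.
case/setDP: (eKg) => _ eg.
have eS : e \notin g.2 by apply: contra eg; apply: subsetP gS e.
have b_Sigma := int_completable_add_edge_parity gbc eS.
apply: (ic_step eKg _ gbc).
exact/(C_iff_SIV_add_edge (conj gK gS) eg gbC b_Sigma).
Qed.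

End Completable.

Theorem lemma3p9 (R : rcfType) (n : nat) (Sigma : {set {set 'I_n}})
  (C : {set sgraph n}) :
  Sigma \subset Kedges n ->
  (forall g, g \in C -> wf_sgraph g) ->
  (forall S', (Kedges n, S') \in C <-> S' = Sigma) ->
  (forall g, g \in C -> g.1 != Kedges n ->
     exists2 e, e \in Kedges n :\: g.1 &
       (add_edge g e false \in C \/ add_edge g e true \in C)) ->
  (forall g, g \in C -> forall e, e \in g.1 ->
     (remove_edge g e \in C <->
      SIV R (remove_edge g e) (add_edge (remove_edge g e) e (e \in Sigma)))) ->
  forall g, wf_sgraph g -> (int_completable R Sigma g <-> g \in C).
Proof.
(* [Sigma \subset Kedges n] is redundant: (i) puts (K_n, Sigma) in C. *)
move=> _ wf_C C_complete C_extend C_remove g wfg; split.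
  exact: int_completable_in_C.
exact: in_C_int_completable.
Qed.
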